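(* Let $P$ be an integer and $m\ge 0$ an integer. Consider the equation $$\sigma_2(n)-n^2=V_{2m}(P,-1)\,n-U_{2m}(P,-1)^2+1$$ in positive integers $n$. Then every solution $n$ with $n>\big(|V_{2m}(P,-1)|+U_{2m}(P,-1)^2-1\big)^3$ is of one of the following forms (so all solutions not of these forms lie in the finite, computable range $n\le(|V_{2m}(P,-1)|+U_{2m}(P,-1)^2-1)^3$): (1) $n=U_{2k+1}(P,-1)\,U_{2k+2m+1}(P,-1)$ for some integer $k\ge 0$, with $U_{2k+1}(P,-1)$ and $U_{2k+2m+1}(P,-1)$ both prime; (2) $n=U_{2k+1}(P,-1)\,U_{2m-2k-1}(P,-1)$ for some integer $k$ with $0\le k\le m-1$ and $m\ne 2k+1$, with $U_{2k+1}(P,-1)$ and $U_{2m-2k-1}(P,-1)$ both prime.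
   Context: For a positive integer $n$ and $k\ge 0$, $\sigma_k(n)=\sum_{d\mid n,\ d>0} d^k$. For integers $P,Q$, the Lucas sequences are defined for $j\ge 0$ by $U_0(P,Q)=0$, $U_1(P,Q)=1$, $U_j(P,Q)=P\,U_{j-1}(P,Q)-Q\,U_{j-2}(P,Q)$ for $j>1$, and $V_0(P,Q)=2$, $V_1(P,Q)=P$, $V_j(P,Q)=P\,V_{j-1}(P,Q)-Q\,V_{j-2}(P,Q)$ for $j>1$. *)

From mathcomp Require Import all_boot all_order all_algebra.
Set Implicit Arguments. Unset Strict Implicit. Unset Printing Implicit Defensive.
Import Order.TTheory GRing.Theory Num.Theory.
Local Open Scope ring_scope.

Definition sigma (k n : nat) : nat := (\sum_(d <- divisors n) d ^ k)%N.

Fixpoint lucasU (P Q : int) (j : nat) : int :=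
  match j with
  | 0%N => 0
  | S j1 => match j1 with
            | 0%N => 1
            | S j0 => P * lucasU P Q j1 - Q * lucasU P Q j0
            end
  end.

Fixpoint lucasV (P Q : int) (j : nat) : int :=
  match j with
  | 0%N => 2
  | S j1 => match j1 with
            | 0%N => P
            | S j0 => P * lucasV P Q j1 - Q * lucasV P Q j0
            end
  end.

Definition int_prime (z : int) : Prop := exists p : nat, prime p /\ z = p%:Z.

From mathcomp Require Import all_boot all_order all_algebra.
From mathcomp Require Import zify ring.
Set Implicit Arguments. Unset Strict Implicit. Unset Printing Implicit Defensive.
Import Order.TTheory GRing.Theory Num.Theory.
Local Open Scope ring_scope.

(* Write A = V_2m and u = U_2m (Q = -1).  Since U_j(-P) = (-1)^(j+1) U_j(P) and
   V_j(-P) = (-1)^j V_j(P), we may assume P >= 0, so that A >= 2.  Comparing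
   sigma_2(n) - n^2 = A n - u^2 + 1 with the divisors 1, p, n/p of n, p its
   least prime factor, shows that n > (A + u^2 - 1)^3 forces n = p q with
   primes p <> q and p^2 + q^2 + u^2 = A p q.  Now A = P u + 2 c with
   c = U_(2m-1) and c^2 + P u c - u^2 = 1, so u divides q - c p and
   w = (q - c p) / u satisfies the Cassini relation p^2 + P p w - w^2 = 1.
   By descent, such pairs are consecutive terms of U, and the addition
   formula and d'Ocagne's identity turn q = c p + u w into the odd-indexed
   terms of the statement. *)

Lemma nat_ind2 (Pr : nat -> Prop) :
  Pr 0%N -> Pr 1%N -> (forall j, Pr j -> Pr j.+1 -> Pr j.+2) -> forall j, Pr j.
Proof.
move=> P0 P1 IH j; suff: Pr j /\ Pr j.+1 by case.
by elim: j => [|j [Pj Pj1]]; split => //; apply: IH.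
Qed.

Section LucasIdentities.

Variables P Q : int.
Local Notation U := (lucasU P Q).
Local Notation V := (lucasV P Q).

Lemma lucasU_rec j : U j.+2 = P * U j.+1 - Q * U j. Proof. by []. Qed.
Lemma lucasV_rec j : V j.+2 = P * V j.+1 - Q * V j. Proof. by []. Qed.

Lemma lucasV_lucasU j : V j = 2 * U j.+1 - P * U j.
Proof.
elim/nat_ind2: j => [|| j IH0 IH1]; rewrite ?lucasV_rec ?IH0 ?IH1 /=; ring.
Qed.

Lemma lucasV_succ j : V j.+1 = P * U j.+1 - 2 * Q * U j.
Proof. by rewrite lucasV_lucasU lucasU_rec; ring. Qed.

Lemma lucasU_cassini j : U j.+1 ^+ 2 - P * U j.+1 * U j + Q * U j ^+ 2 = Q ^+ j.
Proof. by elim: j => [|j IH]; rewrite /= ?exprS -?IH; ring. Qed.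

Lemma lucasV_sqr j : V j ^+ 2 - (P ^+ 2 - 4 * Q) * U j ^+ 2 = 4 * Q ^+ j.
Proof. by rewrite lucasV_lucasU -lucasU_cassini; ring. Qed.

Lemma lucasU_addn a b : U (a + b).+1 = U a.+1 * U b.+1 - Q * U a * U b.
Proof.
elim/nat_ind2: b => [|| b IH0 IH1]; first by rewrite addn0 /=; ring.
  by rewrite addn1 lucasU_rec /=; ring.
rewrite addnS in IH1; rewrite !addnS lucasU_rec IH0 IH1 (lucasU_rec b.+1) (lucasU_rec b).
ring.
Qed.

Lemma lucasU_dOcagne a b : U (a + b) * U b.+1 - U (a + b).+1 * U b = Q ^+ b * U a.
Proof.
by elim: b => [|b IH]; rewrite ?addn0 ?addnS /= ?exprS -?mulrA -?IH; ring.
Qed.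

End LucasIdentities.

Lemma lucasU_oppP P Q j : lucasU (- P) Q j = (-1) ^+ j.+1 * lucasU P Q j.
Proof.
elim/nat_ind2: j => [|| j IH0 IH1]; rewrite ?lucasU_rec ?IH0 ?IH1 /= ?exprS; ring.
Qed.

Lemma lucasV_oppP P Q j : lucasV (- P) Q j = (-1) ^+ j * lucasV P Q j.
Proof.
elim/nat_ind2: j => [|| j IH0 IH1]; rewrite ?lucasV_rec ?IH0 ?IH1 /= ?exprS; ring.
Qed.

Lemma lucasU_oppP_odd P Q j : odd j -> lucasU (- P) Q j = lucasU P Q j.
Proof. by move=> j_odd; rewrite lucasU_oppP -signr_odd /= j_odd mul1r. Qed.

Lemma lucasU_oppP_sqr P Q j : lucasU (- P) Q j ^+ 2 = lucasU P Q j ^+ 2.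
Proof. by rewrite lucasU_oppP exprMn sqrr_sign mul1r. Qed.

Lemma lucasV_oppP_even P Q m : lucasV (- P) Q (2 * m) = lucasV P Q (2 * m).
Proof. by rewrite lucasV_oppP exprM sqrrN !expr1n mul1r. Qed.

(* z / u is a rational root of the monic polynomial X^2 - K X - L. *)
Lemma dvdz_quadratic_root (u z K L : int) :
  u != 0 -> z ^+ 2 = u * (K * z + u * L) -> (u %| z)%Z.
Proof.
move=> u_neq0 zE; set g := gcdz z u.
have g_neq0 : g != 0 by rewrite gcdz_eq0 negb_and u_neq0 orbT.
have [z1 z1E] := dvdzP (dvdz_gcdl z u); have [u1 u1E] := dvdzP (dvdz_gcdr z u).
rewrite -/g in z1E u1E; rewrite z1E u1E dvdz_mul2r //.
have coprime_u1z1 : coprimez u1 z1.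
  apply/eqP/(mulIf g_neq0); rewrite mul1r.
  have g_abs : `|g|%:Z = g by [].
  by rewrite -{1}g_abs mulz_gcdl -u1E -z1E gcdzC.
rewrite -(Gauss_dvdzr _ coprime_u1z1); apply/dvdzP; exists (K * z1 + u1 * L).
apply: (mulIf (mulf_neq0 g_neq0 g_neq0)).
transitivity (z ^+ 2); first by rewrite z1E; ring.
by rewrite zE z1E u1E; ring.
Qed.

Lemma markov_cassini_shift (P u c x y : int) :
  u != 0 -> c ^+ 2 + P * u * c - u ^+ 2 = 1 ->
  x ^+ 2 + y ^+ 2 + u ^+ 2 = (P * u + 2 * c) * x * y ->
  exists2 w, x ^+ 2 + P * x * w - w ^+ 2 = 1 & y = w * u + c * x.
Proof.
move=> u_neq0 cassini markov; set z := y - c * x.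
have zE : z ^+ 2 = u * ((P * x) * z + u * (x ^+ 2 - 1)).
  transitivity (u * ((P * x) * z + u * (x ^+ 2 - 1))
    + (x ^+ 2 + y ^+ 2 + u ^+ 2 - (P * u + 2 * c) * x * y)
    + x ^+ 2 * (c ^+ 2 + P * u * c - u ^+ 2 - 1)); first by rewrite /z; ring.
  by rewrite markov cassini !subrr mulr0 !addr0.
have [w wE] := dvdzP (dvdz_quadratic_root u_neq0 zE).
exists w; last by rewrite -wE /z; ring.
apply: (mulfI (expf_neq0 2 u_neq0)); rewrite mulr1.
transitivity (u * (P * x * z + u * (x ^+ 2 - 1)) - z ^+ 2 + u ^+ 2).
  by rewrite wE; ring.
by rewrite zE subrr add0r.
Qed.

Section DivisorSums.
Local Open Scope nat_scope.

Lemma sigma_sub_leq k n (s : seq nat) :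
  0 < n -> uniq s -> all (dvdn^~ n) s -> \sum_(d <- s) d ^ k <= sigma k n.
Proof.
move=> n_gt0 s_uniq /allP s_dvd.
have s_perm : perm_eq [seq d <- divisors n | d \in s] s.
  apply: uniq_perm; rewrite ?filter_uniq ?divisors_uniq // => d.
  by rewrite mem_filter -dvdn_divisors // andb_idr // => /s_dvd.
by rewrite /sigma -(perm_big _ s_perm) big_filter [leqRHS](bigID [in s]) leq_addr.
Qed.

Lemma sigma_perm k n (s : seq nat) :
  0 < n -> uniq s -> (forall d, (d %| n) = (d \in s)) -> sigma k n = \sum_(d <- s) d ^ k.
Proof.
move=> n_gt0 s_uniq s_dvd; apply: perm_big; apply: uniq_perm; rewrite ?divisors_uniq //.
by move=> d; rewrite -dvdn_divisors.
Qed.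

Lemma dvdn_prime_mul p q d : prime p -> prime q ->
  (d %| p * q) = (d \in [:: 1; p; q; p * q]).
Proof.
move=> p_pr q_pr; rewrite !inE; apply/idP/idP; last first.
  by case/or4P => /eqP ->; [exact: dvd1n | exact: dvdn_mulr | exact: dvdn_mull | exact: dvdnn].
have [/dvdnP [e ->] | p_ndvd] := boolP (p %| d).
  rewrite mulnC dvdn_pmul2l ?prime_gt0 //.
  by case/primeP: q_pr => _ /[apply] /orP [] /eqP ->; rewrite ?muln1 eqxx ?orbT.
rewrite Gauss_dvdr; last by rewrite coprime_sym prime_coprime.
by case/primeP: q_pr => _ /[apply] /orP [] /eqP ->; rewrite eqxx ?orbT.
Qed.

Lemma sigma_prime k p : prime p -> sigma k p = 1 + p ^ k.
Proof.
move=> p_pr; have p_gt1 := prime_gt1 p_pr.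
rewrite (@sigma_perm _ _ [:: 1; p]) ?prime_gt0 //.
- by rewrite !big_cons big_nil exp1n addn0.
- by rewrite /= !inE andbT; lia.
- move=> d; rewrite !inE; apply/idP/idP; first by case/primeP: p_pr => _ /[apply].
  by case/orP => /eqP ->; rewrite ?dvd1n.
Qed.

Lemma sigma_prime_sqr k p : prime p -> sigma k (p * p) = 1 + p ^ k + (p * p) ^ k.
Proof.
move=> p_pr; have p_gt1 := prime_gt1 p_pr.
rewrite (@sigma_perm _ _ [:: 1; p; p * p]) ?muln_gt0 ?prime_gt0 //.
- by rewrite !big_cons big_nil exp1n addn0 addnA.
- by rewrite /= !inE andbT; nia.
- by move=> d; rewrite dvdn_prime_mul // !inE; case: (d == p).
Qed.

Lemma sigma_prime_mul k p q : prime p -> prime q -> p != q ->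
  sigma k (p * q) = 1 + p ^ k + q ^ k + (p * q) ^ k.
Proof.
move=> p_pr q_pr p_neq_q; have p_gt1 := prime_gt1 p_pr; have q_gt1 := prime_gt1 q_pr.
rewrite (@sigma_perm _ _ [:: 1; p; q; p * q]) ?muln_gt0 ?prime_gt0 //.
- by rewrite !big_cons big_nil exp1n addn0 !addnA.
- by rewrite /= !inE andbT; nia.
- by move=> d; rewrite dvdn_prime_mul.
Qed.

Lemma sigma_mul_ge k p a : 1 < p < a ->
  1 + p ^ k + a ^ k + (p * a) ^ k <= sigma k (p * a).
Proof.
case/andP=> p_gt1 p_lt_a.
have := @sigma_sub_leq k (p * a) [:: 1; p; a; p * a].
rewrite !big_cons big_nil exp1n addn0 !addnA; apply; first by rewrite muln_gt0; lia.
  by rewrite /= !inE andbT; nia.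
by rewrite /= dvd1n dvdnn dvdn_mulr ?dvdn_mull.
Qed.

End DivisorSums.

Lemma mul_le_cube_of_markov_le (A u : int) (p a : nat) :
  2 <= A -> (u = 0 -> A = 2) -> (0 < p)%N -> (p ^ 2 <= a)%N ->
  p%:Z ^+ 2 + a%:Z ^+ 2 + u ^+ 2 <= A * p%:Z * a%:Z ->
  (p * a)%:Z <= (A + u ^+ 2 - 1) ^+ 3.
Proof.
move=> A_ge2 uA p_gt0 p2_le_a excess.
have [u0 | u_neq0] := eqVneq u 0.
  rewrite u0 uA // expr0n addr0 in excess *.
  have a_eq_p : a = p by nia.
  have p_eq1 : p = 1%N by move: p2_le_a; rewrite a_eq_p; nia.
  by rewrite a_eq_p p_eq1.
have a_lt : a%:Z < A * p%:Z by nia.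
have p_lt : p%:Z < A by nia.
have A3_le : A ^+ 3 <= (A + u ^+ 2 - 1) ^+ 3 by apply: lerXn2r; rewrite ?nnegrE; nia.
nia.
Qed.

Lemma sigma2_excess_semiprime (A u : int) (n : nat) :
  2 <= A -> (u = 0 -> A = 2) -> (A + u ^+ 2 - 1) ^+ 3 < n%:Z ->
  (sigma 2 n)%:Z - (n ^ 2)%:Z = A * n%:Z - u ^+ 2 + 1 ->
  exists p q : nat, [/\ prime p, prime q, p != q, n = (p * q)%N
    & p%:Z ^+ 2 + q%:Z ^+ 2 + u ^+ 2 = A * p%:Z * q%:Z].
Proof.
move=> A_ge2 uA n_big excess.
have u2_ge0 := sqr_ge0 u.
have n_gt : A + u ^+ 2 - 1 < n%:Z by apply: le_lt_trans n_big; apply: ler_eXnr => //; lia.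
have An_ge : 2 * n%:Z <= A * n%:Z by apply: ler_wpM2r.
have n_gt1 : (1 < n)%N by lia.
set p := pdiv n; have p_pr : prime p by apply: pdiv_prime.
have p_min d : (1 < d)%N -> (d %| n)%N -> (p <= d)%N by apply: pdiv_min_dvd.
set a := (n %/ p)%N; have nE : n = (p * a)%N by rewrite mulnC divnK ?pdiv_dvd.
clearbody a p; have p_gt1 := prime_gt1 p_pr.
have [a_le1 | a_gt1] := leqP a 1.
  have a_eq1 : a = 1%N.
    by apply/eqP; rewrite eqn_leq a_le1 lt0n; apply: contraTneq n_gt1; rewrite nE => ->; rewrite muln0.
  by move: excess; rewrite [in sigma _ _]nE a_eq1 muln1 sigma_prime //; lia.
have p_le_a : (p <= a)%N by apply: p_min; rewrite // nE dvdn_mull.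
have [a_pr | a_npr] := boolP (prime a); last first.
  have [|[r [r_pr r2_le_a r_dvd]]] := primePns a_npr; first lia.
  have p_le_r : (p <= r)%N.
    by apply: p_min; rewrite ?prime_gt1 // (dvdn_trans r_dvd) // nE dvdn_mull.
  have p2_le_a : (p ^ 2 <= a)%N by apply: (leq_trans _ r2_le_a); rewrite leq_exp2r.
  have p_lt_a : (p < a)%N by apply: (leq_trans _ p2_le_a); rewrite -{1}[p]expn1 ltn_exp2l.
  have := @sigma_mul_ge 2 p a; rewrite p_gt1 p_lt_a -nE => /(_ isT) sigma_ge.
  have : p%:Z ^+ 2 + a%:Z ^+ 2 + u ^+ 2 <= A * p%:Z * a%:Z.
    by rewrite nE in excess sigma_ge *; lia.
  move/(mul_le_cube_of_markov_le A_ge2 uA (ltnW p_gt1) p2_le_a).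
  by rewrite -nE; lia.
have [p_eq_a | p_neq_a] := eqVneq p a.
  by move: excess; rewrite nE -p_eq_a sigma_prime_sqr //; lia.
by exists p, a; split => //; move: excess; rewrite nE sigma_prime_mul //; lia.
Qed.

Section NonnegativeParameter.

Variable P : int.
Hypothesis P_ge0 : 0 <= P.
Local Notation U := (lucasU P (-1)).
Local Notation V := (lucasV P (-1)).

Lemma lucasU_rec_m1 j : U j.+2 = P * U j.+1 + U j.
Proof. by rewrite lucasU_rec mulN1r opprK. Qed.

Lemma lucasV_ge0 j : 0 <= V j.
Proof.
elim/nat_ind2: j => [|| j IH0 IH1] //.
by rewrite lucasV_rec mulN1r opprK addr_ge0 ?mulr_ge0.
Qed.

Lemma lucasV_even_sqr m : V (2 * m) ^+ 2 = 4 + (P ^+ 2 + 4) * U (2 * m) ^+ 2.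
Proof.
have := lucasV_sqr P (-1) (2 * m).
by rewrite exprM sqrrN expr1n mulr1 => /eqP; rewrite subr_eq => /eqP ->; ring.
Qed.

Lemma lucasV_even_ge2 m : 2 <= V (2 * m).
Proof. have := lucasV_even_sqr m; have := lucasV_ge0 (2 * m); nia. Qed.

Lemma lucasV_even_eq2 m : U (2 * m) = 0 -> V (2 * m) = 2.
Proof.
move=> U0; have := lucasV_even_sqr m; have := lucasV_ge0 (2 * m).
rewrite U0; nia.
Qed.

(* Descent along (a, b) -> (b, a - P b), which flips the sign of the form. *)
Lemma lucas_pair_of_cassini (a b : int) (s : bool) :
  0 < a -> 0 <= b -> a ^+ 2 - P * a * b - b ^+ 2 = (-1) ^+ s ->
  exists2 j, odd j = s & a = U j.+1 /\ b = U j.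
Proof.
have [N] := ubnP `|a|%N; elim: N => // N IH in a b s *.
move=> a_lt a_gt0 b_ge0.
have [-> | b_gt0] := eqVneq b 0.
  by case: s => /=; [nia | exists 0%N => //; split => //; nia].
have {b_ge0}b_gt0 : 0 < b by lia.
have [c_lt0 | c_ge0] := ltrP (a - P * b) 0; first by case: s => /=; nia.
have [c_eq0 | c_gt0] := eqVneq (a - P * b) 0.
  have -> : a = P * b by lia.
  case: s => /= form; last nia.
  have b1 : b = 1 by nia.
  by exists 1%N => //; rewrite b1 /=; split => //; ring.
move=> form.
have P_gt0 : 0 < P.
  case: (eqVneq P 0) form => [-> | ]; last lia.
  by rewrite !mul0r subr0; case: s => /=; case: (ltrgtP a b); nia.
have [j j_odd [bE cE]] : exists2 j, odd j = ~~ s & b = U j.+1 /\ a - P * b = U j.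
  by apply: IH; [nia | lia | lia | rewrite signrN -form; ring].
by exists j.+1; [rewrite /= j_odd negbK | rewrite lucasU_rec_m1 -bE -cE; split => //; ring].
Qed.

Lemma lucasU_odd_addn k m :
  U (2 * k).+2 * U (2 * m).+2 + U (2 * m).+1 * U (2 * k).+1 = U (2 * k + 2 * m.+1 + 1).
Proof.
have -> : (2 * k + 2 * m.+1 + 1 = ((2 * k).+1 + (2 * m).+1).+1)%N by lia.
by rewrite lucasU_addn; ring.
Qed.

Lemma lucasU_odd_subn_leq i m : (i <= m)%N ->
  U (2 * m).+1 * U (2 * i).+1 - U (2 * m).+2 * U (2 * i) = U (2 * (m - i)).+1.
Proof.
move=> le_im; have := lucasU_dOcagne P (-1) (2 * (m - i)).+1 (2 * i).
have -> : ((2 * (m - i)).+1 + 2 * i = (2 * m).+1)%N by lia.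
by rewrite exprM sqrrN !expr1n mul1r.
Qed.

Lemma lucasU_odd_subn_gtn i m : (m < i)%N ->
  U (2 * m).+1 * U (2 * i).+1 - U (2 * m).+2 * U (2 * i) = U (2 * (i - m.+1)).+1.
Proof.
move=> lt_mi; have := lucasU_dOcagne P (-1) (2 * (i - m.+1)).+1 (2 * m).+1.
have -> : ((2 * (i - m.+1)).+1 + (2 * m).+1 = 2 * i)%N by lia.
rewrite exprS exprM sqrrN !expr1n mulr1 => dOcagne.
by apply: oppr_inj; rewrite -[RHS]mulN1r -dOcagne; ring.
Qed.

Lemma lucas_markov_shift m (x y : int) : U (2 * m.+1) != 0 ->
  x ^+ 2 + y ^+ 2 + U (2 * m.+1) ^+ 2 = V (2 * m.+1) * x * y ->
  exists2 w, x ^+ 2 + P * x * w - w ^+ 2 = 1 & y = w * U (2 * m).+2 + U (2 * m).+1 * x.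
Proof.
rewrite (_ : 2 * m.+1 = (2 * m).+2)%N ?mulnS // => U_neq0 markov.
apply: markov_cassini_shift U_neq0 _ _.
  have sgn : (-1) ^+ (2 * m).+1 = -1 :> int by rewrite exprS exprM sqrrN !expr1n mulr1.
  by have := lucasU_cassini P (-1) (2 * m).+1; rewrite sgn; lia.
by rewrite markov lucasV_succ; congr (_ * _ * _); ring.
Qed.

Lemma lucas_markov_solutions m (x y : int) :
  0 < x -> x != y -> x ^+ 2 + y ^+ 2 + U (2 * m) ^+ 2 = V (2 * m) * x * y ->
  (exists k, x = U (2 * k + 1) /\ y = U (2 * k + 2 * m + 1)
          \/ x = U (2 * k + 2 * m + 1) /\ y = U (2 * k + 1))
  \/ (exists k, [/\ (k <= m - 1)%N, (0 < m)%N, m <> (2 * k + 1)%N,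
                    x = U (2 * k + 1) & y = U (2 * m - 2 * k - 1)]).
Proof.
move=> x_gt0 x_neq_y markov.
have U_neq0 : U (2 * m) != 0.
  apply: contraNneq x_neq_y => U0; move: markov; rewrite U0 lucasV_even_eq2 //; nia.
case: m U_neq0 markov => [|m] // U_neq0 /(lucas_markov_shift U_neq0) [w cassini_xw yE].
have [w_gt0 | w_le0] := ltrP 0 w.
  have [j j_odd [wE xE]] : exists2 j, odd j = true & w = U j.+1 /\ x = U j.
    by apply: lucas_pair_of_cassini; [lia | lia | rewrite expr1; lia].
  have [k jE] : exists k, j = (2 * k).+1.
    by exists j./2; rewrite -{1}(odd_double_half j) j_odd mul2n.
  left; exists k; left; rewrite addn1 -jE; split => //.
  by rewrite yE wE xE jE -lucasU_odd_addn; ring.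
have [j j_even [xE wE]] : exists2 j, odd j = false & x = U j.+1 /\ - w = U j.
  by apply: lucas_pair_of_cassini; [lia | lia | rewrite expr0; lia].
have [i jE] : exists i, j = (2 * i)%N.
  by exists j./2; rewrite -{1}(odd_double_half j) j_even mul2n.
have {}yE : y = U (2 * m).+1 * U (2 * i).+1 - U (2 * m).+2 * U (2 * i).
  by rewrite yE xE -jE -wE; ring.
have [le_im | lt_mi] := leqP i m.
  right; exists i; rewrite addn1 xE jE; split => //; first lia.
    move=> mE; have idx : (2 * (m - i)).+1 = (2 * i).+1 by lia.
    by move: x_neq_y; rewrite yE lucasU_odd_subn_leq // xE jE idx eqxx.
  have -> : (2 * m.+1 - 2 * i - 1 = (2 * (m - i)).+1)%N by lia.
  by rewrite yE lucasU_odd_subn_leq.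
left; exists (i - m.+1)%N; right; rewrite addn1 yE lucasU_odd_subn_gtn // xE jE.
by split => //; congr lucasU; lia.
Qed.

End NonnegativeParameter.

Theorem theorem1p3 (P : int) (m n : nat) :
  (0 < n)%N ->
  (sigma 2 n)%:Z - (n ^ 2)%:Z
    = lucasV P (-1) (2 * m) * n%:Z - (lucasU P (-1) (2 * m)) ^+ 2 + 1 ->
  (`|lucasV P (-1) (2 * m)| + (lucasU P (-1) (2 * m)) ^+ 2 - 1) ^+ 3 < n%:Z ->
  (exists k : nat,
     n%:Z = lucasU P (-1) (2 * k + 1) * lucasU P (-1) (2 * k + 2 * m + 1)
     /\ int_prime (lucasU P (-1) (2 * k + 1))
     /\ int_prime (lucasU P (-1) (2 * k + 2 * m + 1)))
  \/
  (exists k : nat,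
     (k <= m - 1)%N /\ (0 < m)%N /\ m <> (2 * k + 1)%N /\
     n%:Z = lucasU P (-1) (2 * k + 1) * lucasU P (-1) (2 * m - 2 * k - 1)
     /\ int_prime (lucasU P (-1) (2 * k + 1))
     /\ int_prime (lucasU P (-1) (2 * m - 2 * k - 1))).
Proof.
wlog P_ge0 : P / 0 <= P.
  move=> nonneg_case; have [|P_lt0] := lerP 0 P; first exact: nonneg_case.
  have oppP_ge0 : 0 <= - P by rewrite oppr_ge0 ltW.
  move=> n_gt0 excess n_big; have := nonneg_case (- P) oppP_ge0 n_gt0.
  rewrite lucasV_oppP_even lucasU_oppP_sqr => /(_ excess n_big).
  have odd1 k : odd (2 * k + 1) by rewrite addn1 /= oddM.
  case=> [[k sol] | [k [k_le [m_gt0 sol]]]]; [left | right]; exists k.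
    by rewrite -!(lucasU_oppP_odd P) ?odd1 // -mulnDr odd1.
  have idx : (2 * m - 2 * k - 1 = 2 * (m - k - 1) + 1)%N by lia.
  by do 2 split => //; rewrite idx -!(lucasU_oppP_odd P) ?odd1 // -idx.
move=> _ excess n_big.
have A_ge2 := lucasV_even_ge2 P_ge0 m.
rewrite ger0_norm ?(le_trans _ A_ge2) // in n_big.
have [p [q [p_pr q_pr p_neq_q nE markov]]] :=
  sigma2_excess_semiprime A_ge2 (@lucasV_even_eq2 _ P_ge0 m) n_big excess.
have p_gt0 : 0 < p%:Z by rewrite ltz_nat prime_gt0.
have p_int_prime : int_prime p by exists p.
have q_int_prime : int_prime q by exists q.
have [[k [[pE qE] | [pE qE]]] | [k [k_le m_gt0 m_neq pE qE]]] :=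
  lucas_markov_solutions P_ge0 p_gt0 (p_neq_q : p%:Z != q) markov.
- by left; exists k; rewrite nE PoszM -pE -qE.
- by left; exists k; rewrite nE PoszM mulrC -pE -qE.
- by right; exists k; rewrite nE PoszM -pE -qE.
Qed.
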